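(* Let $C\subseteq GF(2)^n$ be an affine subspace such that every vector of $C$ has weight exactly $k$. Then $|C|\le 2^{(n-|n-2k|)/2}$.
   Context: The weight of $x\in GF(2)^n$ is the number of its nonzero coordinates. *)

From HB Require Import structures.
From mathcomp Require Import all_boot all_order all_algebra.
Set Implicit Arguments. Unset Strict Implicit. Unset Printing Implicit Defensive.
Import GRing.Theory.
Local Open Scope ring_scope.

Definition weight (n : nat) (x : 'rV['F_2]_n) : nat := #|[set i | x 0 i != 0]|.

Definition affine_subspace (n : nat) (C : {set 'rV['F_2]_n}) : Prop :=
  exists (a : 'rV['F_2]_n) (V : {vspace 'rV['F_2]_n}),
    C = [set x | x - a \in V].

From mathcomp Require Import all_boot all_order all_algebra zify.
Set Implicit Arguments. Unset Strict Implicit. Unset Printing Implicit Defensive.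
Import GRing.Theory.

(* Let a be a point of C = a + V, so that every a + (x - y) with x, y in C lies
   in C and has the same weight as a. Over GF(2) the support of a + v is the
   symmetric difference of the supports of a and v. If x and y agree on supp a
   then v = x - y is supported off supp a and a + v is heavier than a unless
   v = 0; if they agree off supp a then a + v is lighter unless v = 0. Hence
   restricting to supp a, and also to its complement, is injective on C, so
   |C| <= 2^min(k, n - k), and min(k, n - k) = (n - |n - 2k|)/2. *)

Section Support.
Variables (R : zmodType) (n : nat).
Local Open Scope ring_scope.

Definition supp (x : 'rV[R]_n) : {set 'I_n} := [set i | x 0 i != 0].

Lemma supp_eq0 (x : 'rV[R]_n) : (supp x == set0) = (x == 0).
Proof.
apply/eqP/eqP => [x0 | ->]; last by apply/setP => i; rewrite !inE mxE eqxx.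
apply/rowP => i; rewrite mxE; apply/eqP.
by move/setP/(_ i): x0; rewrite !inE => /negbFE.
Qed.

Lemma supp_subB (S : {set 'I_n}) (x y : 'rV[R]_n) :
  {in S, forall i, x 0 i = y 0 i} -> supp (x - y) \subset ~: S.
Proof.
move=> xy; apply/subsetP => i; rewrite !inE !mxE; apply: contra => iS.
by rewrite xy // subrr.
Qed.

End Support.

Lemma card_rV_le_restrict (R : finType) (n : nat) (S : {set 'I_n})
    (C : {set 'rV[R]_n}) :
  {in C &, forall x y : 'rV[R]_n, {in S, forall i, x 0%R i = y 0%R i} -> x = y} ->
  #|C| <= #|R| ^ #|S|.
Proof.
move=> inj_on_S.
pose restr (x : 'rV[R]_n) := [ffun j : 'I_#|S| => x 0%R (enum_val j)].
rewrite -(card_in_imset (f := restr)); last first.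
  move=> x y xC yC /ffunP rxy; apply: inj_on_S => // i iS.
  by have := rxy (enum_rank_in iS i); rewrite !ffunE enum_rankK_in.
apply: leq_trans (max_card _) _.
by rewrite card_ffun card_ord.
Qed.

Section WeightF2.
Variable n : nat.
Implicit Types a v x : 'rV['F_2]_n.
Local Open Scope ring_scope.

Lemma weightE x : weight x = #|supp x|.
Proof. by []. Qed.

Lemma weight_eq0 x : (weight x == 0%N) = (x == 0).
Proof. by rewrite weightE cards_eq0 supp_eq0. Qed.

Lemma suppD_F2 a v : supp (a + v) = (supp a :\: supp v) :|: (supp v :\: supp a).
Proof.
apply/setP => i; rewrite !inE mxE.
by move: (a 0 i) (v 0 i); do 2!case=> [[|[|//]]] ?.
Qed.

Lemma weightD_disjoint a v :
  [disjoint supp a & supp v] -> weight (a + v) = (weight a + weight v)%N.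
Proof.
move=> av; have va : [disjoint supp v & supp a] by rewrite disjoint_sym.
by rewrite !weightE suppD_F2 (setDidPl av) (setDidPl va) cardsU (disjoint_setI0 av) cards0 subn0.
Qed.

Lemma weightD_sub a v :
  supp v \subset supp a -> weight (a + v) = (weight a - weight v)%N.
Proof.
move=> va; rewrite !weightE suppD_F2.
have /eqP -> : supp v :\: supp a == set0 by rewrite setD_eq0.
by rewrite setU0 (cardsDS va).
Qed.

Lemma card_const_weight_coset a (V : {vspace 'rV['F_2]_n}) :
  {in [set x | x - a \in V], forall x, weight x = weight a} ->
  (#|[set x | (x - a)%R \in V]| <= 2 ^ minn (weight a) (n - weight a))%N.
Proof.
set C := [set x | _] => constw.
have weight_shift : {in C &, forall x y, weight (a + (x - y)) = weight a}.
  move=> x y xC yC; apply: constw; rewrite !inE in xC yC *.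
  have -> : a + (x - y) - a = (x - a) - (y - a) by rewrite addrC addKr opprB addrA subrK.
  exact: memvB.
have card_le S : (forall v, supp v \subset ~: S ->
    weight (a + v) = weight a -> v = 0) -> (#|C| <= 2 ^ #|S|)%N.
  move=> shift0; rewrite -[X in (_ <= X ^ _)%N]card_Fp //; apply: card_rV_le_restrict.
  move=> x y xC yC xy; apply/eqP; rewrite -subr_eq0; apply/eqP.
  exact: shift0 (supp_subB xy) (weight_shift x y xC yC).
have [_ | _] := leqP (weight a) (n - weight a)%N.
- rewrite weightE; apply: card_le => v.
  rewrite -disjoints_subset disjoint_sym => /weightD_disjoint -> wv.
  by apply/eqP; rewrite -weight_eq0; lia.
- have <- : #|~: supp a| = (n - weight a)%N.
    by have := cardsC (supp a); rewrite card_ord -weightE; lia.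
  apply: card_le => v; rewrite setCK => va; rewrite weightD_sub // => wv.
  have := subset_leq_card va; rewrite -!weightE => vle.
  by apply/eqP; rewrite -weight_eq0; lia.
Qed.

End WeightF2.

Theorem corollary5 (n k : nat) (C : {set 'rV['F_2]_n}) :
  affine_subspace C ->
  (forall x, x \in C -> weight x = k) ->
  #|C| <= 2 ^ ((n - `|n - k.*2|) %/ 2).
Proof.
case=> a [V ->] constw.
have aC : a \in [set x | (x - a)%R \in V] by rewrite inE subrr mem0v.
have wa := constw a aC; subst k.
have wn : weight a <= n by have := max_card (supp a); rewrite card_ord.
have -> : (n - `|n - (weight a).*2|) %/ 2 = minn (weight a) (n - weight a) by lia.
exact: card_const_weight_coset.
Qed.
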